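(* For all positive even $k_1,\ldots, k_n$ one has \[S_{k_1}\,|\, \ldots\,|\, S_{k_n}=S_{|\vec{k}|-n,F_n}\, .\]
   Context: $\mathscr{P}$ is the set of partitions and $r_m(\lambda)$ the number of parts of $\lambda$ equal to $m$. $S_k(\lambda)=-\frac{B_k}{2k}+\sum_i\lambda_i^{k-1}$ for even $k$. For $k>0$ and $f:\mathbb{N}\to\mathbb{Q}$ extended by $f(0)=0$, $S_{k,f}(\lambda)=-\frac{B_{k+1}}{2(k+1)}\delta_{f,\mathrm{id}}+\sum_{m\ge1}m^kf(r_m(\lambda))$ (so $S_k=S_{k-1,\mathrm{id}}$). $F_n$ is the Faulhaber polynomial: the polynomial with zero constant term with $F_n(N)=\sum_{i=1}^N i^{n-1}$ for $N\ge1$. $|\vec k|=k_1+\cdots+k_n$. The induced product $\odot$ is defined by $\langle f\odot g\rangle_{\vec u}=\langle f\rangle_{\vec u}\langle g\rangle_{\vec u}$ with $\langle f\rangle_{\vec u}=\sum_\lambda f(\lambda)u_{\lambda_1}u_{\lambda_2}\cdots/\sum_\lambda u_{\lambda_1}u_{\lambda_2}\cdots$. The connected product is $f_1|\ldots|f_n=\sum_{\alpha\in\Pi(n)}\mu(\alpha,\mathbf{1})\bigodot_{A\in\alpha}f_A$, where $\Pi(n)$ is the set of set partitions of $\{1,\ldots,n\}$, $\mu(\alpha,\mathbf{1})=(-1)^{\ell(\alpha)-1}(\ell(\alpha)-1)!$, and $f_A=\prod_{a\in A}f_a$ (pointwise product). *)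

From HB Require Import structures.
From mathcomp Require Import all_boot all_order all_algebra.
From Stdlib Require Import ClassicalEpsilon.
Set Implicit Arguments. Unset Strict Implicit. Unset Printing Implicit Defensive.
Import Order.TTheory GRing.Theory Num.Theory.
Local Open Scope ring_scope.

Definition is_partition (l : seq nat) : bool :=
  sorted geq l && all (fun x => 0 < x)%N l.

Definition mult (m : nat) (l : seq nat) : nat := count_mem m l.

(* functions P -> Q (only their values on partitions matter) *)
Definition pfun := seq nat -> rat.

(* B_0 = 1, B_m = -1/(m+1) \sum_{j<m} C(m+1,j) B_j  (so B_1 = -1/2; the
   even-index values used below do not depend on this convention) *)
Fixpoint bern_seq (m : nat) : seq rat :=
  if m is m'.+1 then
    let s := bern_seq m' in
    rcons s (- (m.+1%:R)^-1 * \sum_(j < m) ('C(m.+1, j))%:R * s`_j)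
  else [:: 1].
Definition bernoulli (m : nat) : rat := (bern_seq m)`_m.

Definition S (k : nat) : pfun :=
  fun l => - bernoulli k / (2 * k%:R) + \sum_(x <- l) (x%:R) ^+ k.-1.

Definition is_id (f : nat -> rat) : bool :=
  if excluded_middle_informative (forall N, (0 < N)%N -> f N = N%:R)
  then true else false.

(* S_{k,f}(lambda) = -B_{k+1}/(2(k+1)) delta_{f,id} + \sum_{m>=1} m^k f(r_m(lambda)),
   with f(0) = 0: only the distinct parts m of lambda contribute. *)
Definition Skf (k : nat) (f : nat -> rat) : pfun :=
  fun l => - bernoulli k.+1 / (2 * (k.+1)%:R) * (is_id f)%:R
           + \sum_(m <- undup l) (m%:R) ^+ k * f (mult m l).

Definition faulhaber (n : nat) (N : nat) : rat :=
  \sum_(1 <= i < N.+1) (i%:R) ^+ n.-1.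

(* ---------- Formal power series in u_1,u_2,... ----------
   A formal power series \sum_lambda a(lambda) u_lambda (u_lambda = \prod_i u_{lambda_i})
   is identified with its coefficient function a : pfun.  Multiplication is the
   Cauchy product over the decompositions lambda = alpha \sqcup beta (multiset union). *)
Fixpoint bitseqs (m : nat) : seq bitseq :=
  if m is m'.+1 then [seq b :: s | b <- [:: true; false], s <- bitseqs m']
  else [:: [::]].

Definition splits (l : seq nat) : seq (seq nat * seq nat) :=
  undup [seq (mask b l, mask (map negb b) l) | b <- bitseqs (size l)].

Definition smul (a b : pfun) : pfun :=
  fun l => \sum_(p <- splits l) a p.1 * b p.2.

(* Z = \sum_lambda u_lambda = \prod_m (1-u_m)^{-1}; its inverse \prod_m (1 - u_m) *)
Definition Zser : pfun := fun _ => 1.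
Definition Zinv : pfun := fun l => if uniq l then (-1) ^+ size l else 0.

(* u-bracket  <f>_u = (\sum_lambda f(lambda) u_lambda) / (\sum_lambda u_lambda) *)
Definition ubracket (f : pfun) : pfun := smul f Zinv.

(* induced product: the unique f (.) g with <f (.) g>_u = <f>_u <g>_u,
   namely (f (.) g) u-series = <f>_u <g>_u * Z *)
Definition odot (f g : pfun) : pfun := smul (smul (ubracket f) (ubracket g)) Zser.

(* unit for odot: the constant function 1 (<1>_u = 1) *)
Definition odot_one : pfun := fun _ => 1.

Definition fprod (n : nat) (f : 'I_n -> pfun) (A : {set 'I_n}) : pfun :=
  fun l => \prod_(a in A) f a l.

Definition mobius_top (n : nat) (P : {set {set 'I_n}}) : rat :=
  (-1) ^+ (#|P|.-1) * ((#|P|.-1)`!)%:R.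

Definition connected (n : nat) (f : 'I_n -> pfun) : pfun :=
  fun l => \sum_(P : {set {set 'I_n}} | partition P [set: 'I_n])
             mobius_top P * (\big[odot/odot_one]_(A in P) fprod f A) l.

From Pilot Require Import Defs.
From HB Require Import structures.
From mathcomp Require Import all_boot all_order all_algebra.
From mathcomp Require Import zify ring.
From Stdlib Require Import FunctionalExtensionality ClassicalEpsilon.
Set Implicit Arguments. Unset Strict Implicit. Unset Printing Implicit Defensive.
Import Order.TTheory GRing.Theory Num.Theory.
Local Open Scope ring_scope.

(* Coefficient functions on partitions, multiplied by the Cauchy product [smul] over
   splittings of the multiset of parts, form a commutative ring in which [Zser] and
   [Zinv] are inverse, so that f ⊙ g = <f>_u · g.  For f = c + Σ_m ψ(m) Φ(r_m) with
   Φ(0) = 0 the bracket <f>_u vanishes except at ∅ and at the one-block partitions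
   (m^j), where it equals ψ(m) (Φ(j) − Φ(j−1)); hence f ⊙ g removes j equal parts
   from the argument of g.  For T_B = S_{K_B, F_{|B|}}, K_B = Σ_{b∈B} (k_b − 1),
   the product T_B ⊙ S_{D∖B}, where S_A = Π_{a∈A} S_{k_a}, therefore evaluates each
   S_{k_a} with j parts m removed, i.e. as S_{k_a} − j m^{k_a−1}; summing over
   x ∈ B ⊆ D and expanding Π_{a≠x} ((S_{k_a} − j m^{k_a−1}) + j m^{k_a−1}) gives
   the recursion Σ_{x∈B⊆D} T_B ⊙ S_{D∖B} = S_D.  The connected products satisfy
   the same recursion, by the Möbius identity μ(q) + (q−1) μ(q−1) = [q = 1] for
   μ(q) = (−1)^{q−1} (q−1)!; the recursion determines its solution by induction
   on |D|, so the two families agree, and D = {1, …, n} is the theorem. *)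

Lemma mem_bitseqs m b : (b \in bitseqs m) = (size b == m).
Proof.
elim: m b => [|m IH] b; first by case: b.
rewrite /= cats0 mem_cat; apply/idP/idP.
- by case/orP => /mapP[s hs ->]; rewrite /= eqSS -IH.
- case: b => [//|x b]; rewrite /= eqSS -IH => hb.
  by case: x; apply/orP; [left|right]; apply/mapP; exists b.
Qed.

Lemma splitsP l p :
  reflect (exists2 b : bitseq, size b = size l & p = (mask b l, mask (map negb b) l))
          (p \in splits l).
Proof.
rewrite /splits mem_undup; apply: (iffP mapP) => -[b hb ->]; exists b => //.
  by apply/eqP; rewrite -mem_bitseqs.
by rewrite mem_bitseqs hb.
Qed.

Lemma mask_nseq (T : Type) (b : bitseq) n (d : T) :
  size b = n -> mask b (nseq n d) = nseq (count id b) d.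
Proof. by move <-; elim: b => [|[] b IH] //=; rewrite IH. Qed.

Lemma count_map_negb (b : bitseq) : count id (map negb b) = (size b - count id b)%N.
Proof. by rewrite count_map -(count_predC id b) addKn. Qed.

Section SplitsNseqCat.

Variables (d r : nat) (l : seq nat).

Let glue i (p : seq nat * seq nat) := (nseq i d ++ p.1, nseq (r - i) d ++ p.2).

Let glued_splits := [seq glue i p | i <- iota 0 r.+1, p <- splits l].

Let splits_no_block s : d \notin l -> s \in splits l -> count_mem d s.1 = 0%N.
Proof.
by move=> dl /splitsP[b _ ->]; apply/count_memPn; apply: contra dl; apply: mem_mask.
Qed.

Let uniq_glued_splits : d \notin l -> uniq glued_splits.
Proof.
move=> dl; apply: allpairs_uniq; [exact: iota_uniq | exact: undup_uniq |].
move=> [i p] [j q] /allpairsP[[i1 p1] [_ hp1 [-> ->]]].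
move=> /allpairsP[[j1 q1] [_ hq1 [-> ->]]] /= [e1 e2].
have eij : i1 = j1.
  have := congr1 (count_mem d) e1.
  by rewrite !count_cat !count_nseq /= eqxx !mul1n !splits_no_block // !addn0.
subst j1; congr (_, _).
have := congr1 (drop i1) e1; have := congr1 (drop (r - i1)) e2.
rewrite !drop_size_cat ?size_nseq // => h2 h1.
by rewrite [p1]surjective_pairing [q1]surjective_pairing h1 h2.
Qed.

Let splits_glued p : p \in splits (nseq r d ++ l) -> p \in glued_splits.
Proof.
case/splitsP => b; rewrite size_cat size_nseq => hb ->.
have size_take_b : size (take r b) = r by rewrite size_take hb; case: ltnP; lia.
apply/allpairsP; exists (count id (take r b), (mask (drop r b) l, mask (map negb (drop r b)) l)).
split.
- by rewrite mem_iota add0n ltnS /= -[X in (_ <= X)%N]size_take_b count_size.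
- by apply/splitsP; exists (drop r b); rewrite // size_drop hb addKn.
- rewrite /glue /= -{1 2}(cat_take_drop r b) map_cat !mask_cat ?size_map ?size_nseq //.
  by rewrite !mask_nseq ?size_map // count_map_negb size_take_b.
Qed.

Let glued_splits_splits p : p \in glued_splits -> p \in splits (nseq r d ++ l).
Proof.
case/allpairsP => -[i p'] [hi /splitsP[b2 hb2 ->] ->] /=.
rewrite mem_iota add0n ltnS in hi.
apply/splitsP; exists (nseq i true ++ nseq (r - i) false ++ b2).
  by rewrite !size_cat !size_nseq hb2 addnA subnKC.
have hsz : size (nseq i true ++ nseq (r - i) false) = r by rewrite size_cat !size_nseq subnKC.
rewrite catA map_cat !mask_cat ?size_map ?size_nseq // !mask_nseq ?size_map //.
by rewrite count_map_negb hsz count_cat !count_nseq /= mul1n mul0n addn0.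
Qed.

Lemma big_splits_nseq_cat (F : seq nat * seq nat -> rat) : d \notin l ->
  \sum_(p <- splits (nseq r d ++ l)) F p =
  \sum_(i < r.+1) \sum_(p <- splits l) F (nseq i d ++ p.1, nseq (r - i) d ++ p.2).
Proof.
move=> dl; rewrite -(big_mkord xpredT (fun i => \sum_(p <- splits l) F (glue i p))).
rewrite /index_iota subn0 -big_allpairs_dep.
apply: perm_big; apply: uniq_perm; [exact: undup_uniq | exact: uniq_glued_splits |].
by move=> p; apply/idP/idP => [/splits_glued | /glued_splits_splits].
Qed.

End SplitsNseqCat.

Lemma is_partition_cons h t : is_partition (h :: t) ->
  [/\ (0 < h)%N, is_partition t & all (fun x => x <= h)%N t].
Proof.
rewrite /is_partition /= => /andP[hp /andP[h0 ht]]; split => //.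
- by rewrite ht (path_sorted hp).
- by apply: order_path_min hp => a b c /= hab hbc; apply: leq_trans hab.
Qed.

Lemma is_partition_largest_block l : is_partition l -> l = [::] \/
  exists d r l', [/\ (0 < d)%N, (0 < r)%N, is_partition l',
                     all (fun x => x < d)%N l' & l = nseq r d ++ l'].
Proof.
elim: l => [|h t IH]; first by left.
move=> /is_partition_cons [h0 pt ht]; right.
case: (IH pt) => [->|[d [r [l' [d0 r0 pl' al' el']]]]]; first by exists h, 1%N, [::].
have dh : (d <= h)%N.
  by apply: (allP ht); rewrite el' mem_cat; case: r r0 {el'} => // r _; rewrite inE eqxx.
case: (ltngtP d h) dh => // [dlt|deq] _; last by exists h, r.+1, l'; rewrite -deq el'.
exists h, 1%N, t; split => //.
rewrite el' all_cat; apply/andP; split; first by apply/allP => x /nseqP[-> _].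
by apply/allP => x /(allP al') /ltn_trans; apply.
Qed.

Lemma is_partition_ind (P : seq nat -> Prop) : P [::] ->
  (forall d r l, (0 < d)%N -> (0 < r)%N -> is_partition l -> all (fun x => x < d)%N l ->
     P l -> P (nseq r d ++ l)) ->
  forall l, is_partition l -> P l.
Proof.
move=> P0 Pblock l; elim: {l}(size l) {-2}l (leqnn (size l)) => [|n IH] l hl pl.
  by case: l hl pl.
case: (is_partition_largest_block pl) => [->//|[d [r [l' [d0 r0 pl' al' el]]]]].
subst l; apply: Pblock => //; apply: IH => //.
move: hl; rewrite size_cat size_nseq; case: r r0 {pl} => // r _.
by rewrite addSn ltnS; apply: leq_trans; apply: leq_addl.
Qed.

Lemma all_ltn_notin d l : all (fun x => x < d)%N l -> d \notin l.
Proof. by move=> /allP h; apply/negP => /h; rewrite ltnn. Qed.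

Lemma splits_subset l p : p \in splits l -> {subset p.1 <= l} /\ {subset p.2 <= l}.
Proof. by case/splitsP => b _ ->; split => x /mem_mask. Qed.

Lemma splits_is_partition l p :
  is_partition l -> p \in splits l -> is_partition p.1 /\ is_partition p.2.
Proof.
move=> /andP[sl al] /splitsP[b _ ->] /=.
have geq_trans : transitive (@geq : rel nat) by move=> a b' c /= h1 h2; apply: leq_trans h2 h1.
by split; rewrite /is_partition sorted_mask ?all_mask.
Qed.

Definition shift (i d : nat) (a : pfun) : pfun := fun q => a (nseq i d ++ q).

Definition delta : pfun := fun q => if q is [::] then 1 else 0.

Section CauchyProduct.

Implicit Types (a b g : pfun) (l : seq nat).

Lemma smul_nil a b : smul a b [::] = a [::] * b [::].
Proof. by rewrite /smul big_seq1. Qed.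

Lemma smul_nseq_cat a b d r l : d \notin l ->
  smul a b (nseq r d ++ l) = \sum_(i < r.+1) smul (shift i d a) (shift (r - i) d b) l.
Proof. exact: big_splits_nseq_cat. Qed.

Lemma eq_smul a a' b b' l :
  (forall p, p \in splits l -> a p.1 = a' p.1 /\ b p.2 = b' p.2) -> smul a b l = smul a' b' l.
Proof. by move=> h; apply: eq_big_seq => p /h [-> ->]. Qed.

Lemma smul_suml (I : Type) (s : seq I) (P : pred I) (F : I -> pfun) b l :
  smul (fun q => \sum_(i <- s | P i) F i q) b l = \sum_(i <- s | P i) smul (F i) b l.
Proof. by rewrite /smul exchange_big; apply: eq_bigr => p _; rewrite mulr_suml. Qed.

Lemma smul_sumr (I : Type) (s : seq I) (P : pred I) (F : I -> pfun) a l :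
  smul a (fun q => \sum_(i <- s | P i) F i q) l = \sum_(i <- s | P i) smul a (F i) l.
Proof. by rewrite /smul exchange_big; apply: eq_bigr => p _; rewrite mulr_sumr. Qed.

Lemma smul_scalel (c : rat) a b l : smul (fun q => c * a q) b l = c * smul a b l.
Proof. by rewrite /smul mulr_sumr; apply: eq_bigr => p _; rewrite mulrA. Qed.

Lemma smul_scaler (c : rat) a b l : smul a (fun q => c * b q) l = c * smul a b l.
Proof. by rewrite /smul mulr_sumr; apply: eq_bigr => p _; rewrite mulrCA. Qed.

Lemma smul_addl a a' b l : smul (fun q => a q + a' q) b l = smul a b l + smul a' b l.
Proof. by rewrite /smul -big_split; apply: eq_bigr => p _; rewrite mulrDl. Qed.

Lemma smulC l : is_partition l -> forall a b, smul a b l = smul b a l.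
Proof.
move: l; apply: is_partition_ind => [|d r l _ _ _ /all_ltn_notin dl IH] a b.
  by rewrite !smul_nil mulrC.
rewrite !smul_nseq_cat //; under eq_bigr do rewrite IH.
rewrite (reindex_inj rev_ord_inj) /=; apply: eq_bigr => i _.
by rewrite subSS subKn // -ltnS.
Qed.

Lemma smul1l l : is_partition l -> forall b, smul delta b l = b l.
Proof.
move: l; apply: is_partition_ind => [|d r l _ _ _ /all_ltn_notin dl IH] b.
  by rewrite smul_nil mul1r.
rewrite smul_nseq_cat // big_ord_recl subn0 IH big1 ?addr0 // => i _.
by rewrite /smul big1 // => p _; rewrite /shift /= mul0r.
Qed.

Lemma smul1r l : is_partition l -> forall a, smul a delta l = a l.
Proof. by move=> pl a; rewrite smulC // smul1l. Qed.

Lemma Zinv_nseq_cat j d q : d \notin q ->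
  Zinv (nseq j d ++ q) = if j == 0%N then Zinv q else if j == 1%N then - Zinv q else 0.
Proof.
move=> dq; rewrite /Zinv cat_uniq size_cat size_nseq.
case: j => [|[|j]] //=; last by rewrite inE eqxx.
- by have -> : has (in_mem^~ (mem [::])) q = false by apply/hasP => -[].
- have -> : has (in_mem^~ (mem [:: d])) q = (d \in q).
    by apply/hasP/idP => [[x xq /[!inE] /eqP <-] // | dq']; exists d; rewrite ?inE.
  by rewrite (negbTE dq) /=; case: ifP => _; rewrite ?oppr0 // add1n exprS mulN1r.
Qed.

Lemma smul_Zinv_nseq_cat a d r l : d \notin l -> (0 < r)%N ->
  smul a Zinv (nseq r d ++ l) = smul (shift r d a) Zinv l - smul (shift r.-1 d a) Zinv l.
Proof.
move=> dl r0; rewrite smul_nseq_cat //.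
have term (i : 'I_r.+1) : smul (shift i d a) (shift (r - i) d Zinv) l =
    (if (r - i == 0)%N then 1 else if (r - i == 1)%N then -1 else 0) * smul (shift i d a) Zinv l.
  rewrite -smul_scaler; apply: eq_smul => p /splits_subset [_ sub2]; split => //.
  rewrite /shift Zinv_nseq_cat; last by apply: contra dl; apply: sub2.
  by case: ifP; rewrite ?mul1r //; case: ifP; rewrite ?mulN1r ?mul0r.
under eq_bigr do rewrite term.
case: r r0 {term} => // r _.
rewrite big_ord_recr /= subnn mul1r big_ord_recr /= subSn // subnn /= mulN1r.
rewrite big1 => [|i _]; first by rewrite add0r addrC.
have : (2 <= r.+1 - i)%N by have := ltn_ord i; lia.
by case: (r.+1 - i)%N => [|[|k]] //= _; rewrite mul0r.
Qed.

Lemma smul_Zser_Zinv l : is_partition l -> smul Zser Zinv l = delta l.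
Proof.
move: l; apply: is_partition_ind => [|d r l _ r0 _ /all_ltn_notin dl _].
  by rewrite smul_nil mulr1.
by rewrite smul_Zinv_nseq_cat // subrr; case: r r0.
Qed.

Lemma sum_triangle (V : nmodType) (G : nat -> nat -> V) r :
  \sum_(i < r.+1) \sum_(j < i.+1) G j (i - j)%N = \sum_(j < r.+1) \sum_(k < (r - j).+1) G j k.
Proof.
elim: r => [|r IH]; first by rewrite !big_ord_recl !big_ord0.
rewrite big_ord_recr /= IH [in RHS]big_ord_recr /= subnn big_ord1.
under [in RHS]eq_bigr => j _ do rewrite /= subSn ?(leq_ord j) // big_ord_recr /=.
rewrite big_split /= -addrA; congr (_ + _).
rewrite big_ord_recr /= subnn; congr (_ + _).
by apply: eq_bigr => j _; rewrite subSn ?(leq_ord j).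
Qed.

Lemma smulA l : is_partition l -> forall a b g, smul (smul a b) g l = smul a (smul b g) l.
Proof.
move: l; apply: is_partition_ind => [|d r l _ _ _ /all_ltn_notin dl IH] a b g.
  by rewrite !smul_nil mulrA.
rewrite !smul_nseq_cat //.
pose G i j := smul (shift i d a) (smul (shift j d b) (shift (r - i - j) d g)) l.
have left_term (i : 'I_r.+1) :
    smul (shift i d (smul a b)) (shift (r - i) d g) l = \sum_(j < i.+1) G j (i - j)%N.
  transitivity (smul (fun q => \sum_(j < i.+1) smul (shift j d a) (shift (i - j) d b) q)
                     (shift (r - i) d g) l).
    apply: eq_smul => p /splits_subset [sub1 _]; split => //.
    by rewrite /shift smul_nseq_cat //; apply: contra dl; apply: sub1.
  rewrite smul_suml; apply: eq_bigr => j _.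
  by rewrite IH /G -subnDA subnKC // (leq_ord j).
have right_term (i : 'I_r.+1) :
    smul (shift i d a) (shift (r - i) d (smul b g)) l = \sum_(j < (r - i).+1) G i j.
  rewrite -smul_sumr; apply: eq_smul => p /splits_subset [_ sub2]; split => //.
  by rewrite /shift smul_nseq_cat //; apply: contra dl; apply: sub2.
under eq_bigr do rewrite left_term.
under [RHS]eq_bigr do rewrite right_term.
exact: sum_triangle.
Qed.

End CauchyProduct.

Section InducedProduct.

Implicit Types (a b f g h : pfun) (l : seq nat).

Lemma smul_congr a a' b b' l : is_partition l ->
  {in is_partition, a =1 a'} -> {in is_partition, b =1 b'} -> smul a b l = smul a' b' l.
Proof.
move=> pl ha hb; apply: eq_smul => p lp; have [p1 p2] := splits_is_partition pl lp.
by rewrite ha // hb.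
Qed.

Lemma smul_ubracket_Zser g l : is_partition l -> smul (ubracket g) Zser l = g l.
Proof.
move=> pl; rewrite smulA // -[RHS](smul1r pl); apply: smul_congr => // q pq.
by rewrite smulC // smul_Zser_Zinv.
Qed.

Lemma odotE f g l : is_partition l -> odot f g l = smul (ubracket f) g l.
Proof.
by move=> pl; rewrite /odot smulA //; apply: smul_congr => // q; apply: smul_ubracket_Zser.
Qed.

Lemma odot1r f l : is_partition l -> odot f odot_one l = f l.
Proof. by move=> pl; rewrite odotE // smul_ubracket_Zser. Qed.

Lemma odot1l g l : is_partition l -> odot odot_one g l = g l.
Proof.
move=> pl; rewrite odotE // -[RHS](smul1l pl); apply: smul_congr => // q.
exact: smul_Zser_Zinv.
Qed.

Lemma odotC f g l : is_partition l -> odot f g l = odot g f l.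
Proof. by move=> pl; apply: smul_congr => // q pq; rewrite smulC. Qed.

Lemma ubracket_odot f g q : is_partition q ->
  ubracket (odot f g) q = smul (ubracket f) (ubracket g) q.
Proof.
move=> pq; rewrite /ubracket /odot smulA // -[RHS](smul1r pq).
by apply: smul_congr => // q' pq'; rewrite smul_Zser_Zinv.
Qed.

Lemma odotA f g h l : is_partition l -> odot (odot f g) h l = odot f (odot g h) l.
Proof.
move=> pl; rewrite odotE //.
transitivity (smul (smul (ubracket f) (ubracket g)) h l).
  by apply: smul_congr => // q pq; rewrite ubracket_odot.
by rewrite smulA // odotE //; apply: smul_congr => // q pq; rewrite odotE.
Qed.

Lemma odot_congr f f' g g' l : is_partition l ->
  {in is_partition, f =1 f'} -> {in is_partition, g =1 g'} -> odot f g l = odot f' g' l.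
Proof.
by move=> pl hf hg; rewrite !odotE //; apply: smul_congr => // q pq; apply: smul_congr.
Qed.

Lemma odot_suml (I : Type) (s : seq I) (P : pred I) (c : I -> rat) (F : I -> pfun) g l :
  is_partition l ->
  odot (fun q => \sum_(i <- s | P i) c i * F i q) g l = \sum_(i <- s | P i) c i * odot (F i) g l.
Proof.
move=> pl; rewrite odotE //.
transitivity (smul (fun q => \sum_(i <- s | P i) c i * ubracket (F i) q) g l).
  apply: eq_smul => p _; split => //.
  by rewrite /ubracket smul_suml; apply: eq_bigr => i _; rewrite smul_scalel.
by rewrite smul_suml; apply: eq_bigr => i _; rewrite smul_scalel odotE.
Qed.

End InducedProduct.

Definition Sgen (c : rat) (psi Phi : nat -> rat) : pfun :=
  fun l => c + \sum_(m <- undup l) psi m * Phi (mult m l).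

Definition remove_parts (m j : nat) (l : seq nat) : seq nat :=
  nseq (mult m l - j) m ++ filter (predC1 m) l.

Definition perm_invariant (g : pfun) := forall s t, perm_eq s t -> g s = g t.

Lemma perm_invariant_shift g i d : perm_invariant g -> perm_invariant (shift i d g).
Proof. by move=> hg s t st; apply: hg; rewrite perm_cat2l. Qed.

Lemma undup_nseq_cat (d r : nat) (l : seq nat) : d \notin l -> (0 < r)%N ->
  undup (nseq r d ++ l) = d :: undup l.
Proof.
move=> dl; case: r => // r _; rewrite undup_cat.
have -> : undup (nseq r.+1 d) = [:: d].
  by elim: r => [|r IH] //; move: IH => /= IH; rewrite inE eqxx /= IH.
by rewrite /= dl.
Qed.

Lemma mult_nseq_cat (m d r : nat) (l : seq nat) :
  mult m (nseq r d ++ l) = ((d == m) * r + mult m l)%N.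
Proof. by rewrite /mult count_cat count_nseq. Qed.

Lemma mult_notin (d : nat) (l : seq nat) : d \notin l -> mult d l = 0%N.
Proof. exact: count_memPn. Qed.

Lemma remove_parts_nseq_cat (d r j : nat) (l : seq nat) : d \notin l ->
  remove_parts d j (nseq r d ++ l) = nseq (r - j) d ++ l.
Proof.
move=> dl; rewrite /remove_parts mult_nseq_cat eqxx mul1n (mult_notin dl) addn0.
rewrite filter_cat filter_nseq /= eqxx /=; congr (_ ++ _).
by apply/all_filterP; rewrite all_predC has_pred1.
Qed.

Lemma perm_remove_parts_nseq_cat (m d r j : nat) (l : seq nat) : d != m ->
  perm_eq (remove_parts m j (nseq r d ++ l)) (nseq r d ++ remove_parts m j l).
Proof.
move=> dm; rewrite /remove_parts mult_nseq_cat (negbTE dm) add0n filter_cat filter_nseq /=.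
by rewrite dm mul1n; apply/permPl/perm_catCA.
Qed.

Section MultiplicityFunctions.

Variables (c : rat) (psi Phi : nat -> rat).
Hypothesis Phi0 : Phi 0%N = 0.

Lemma Sgen_nseq_cat j d q : d \notin q ->
  Sgen c psi Phi (nseq j d ++ q) = Sgen c psi Phi q + psi d * Phi j.
Proof.
move=> dq; case: j => [|j]; first by rewrite Phi0 mulr0 addr0.
rewrite /Sgen undup_nseq_cat // big_cons mult_nseq_cat eqxx mul1n (mult_notin dq) addn0.
rewrite (eq_big_seq (fun m => psi m * Phi (mult m q))); first by rewrite [psi d * _ + _]addrC addrA.
move=> m; rewrite mem_undup => mq; rewrite mult_nseq_cat.
by have -> : (d == m) = false by apply: contraNF dq => /eqP ->.
Qed.

Lemma ubracket_Sgen_nseq_cat i d q : is_partition q -> d \notin q ->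
  ubracket (Sgen c psi Phi) (nseq i.+1 d ++ q) =
  if q == [::] then psi d * (Phi i.+1 - Phi i) else 0.
Proof.
move=> pq dq; rewrite /ubracket smul_Zinv_nseq_cat //.
have shift_Sgen j : smul (shift j d (Sgen c psi Phi)) Zinv q =
    smul (Sgen c psi Phi) Zinv q + psi d * Phi j * smul Zser Zinv q.
  rewrite -smul_scalel -smul_addl; apply: eq_smul => p /splits_subset [sub1 _].
  by split => //; rewrite /shift Sgen_nseq_cat ?mulr1 //; apply: contra dq; apply: sub1.
rewrite !shift_Sgen opprD addrACA subrr add0r -mulNr -mulrDl -mulrBr /= smul_Zser_Zinv //.
by case: q {pq dq shift_Sgen} => [|x q] /=; rewrite ?mulr1 ?mulr0.
Qed.

Lemma smul_ubracket_Sgen_block g d r i l : is_partition l -> d \notin l ->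
  smul (shift i.+1 d (ubracket (Sgen c psi Phi))) (shift (r - i.+1) d g) l =
  psi d * (Phi i.+1 - Phi i) * g (nseq (r - i.+1) d ++ l).
Proof.
move=> pl dl; rewrite -/(shift (r - i.+1) d g l) -(smul1l pl (shift _ d g)) -smul_scalel.
apply: eq_smul => p lp; split => //.
have [pp1 _] := splits_is_partition pl lp; have [sub1 _] := splits_subset lp.
rewrite /shift ubracket_Sgen_nseq_cat //; last by apply: contra dl; apply: sub1.
by case: (p.1) => [|? ?] /=; rewrite ?mulr1 ?mulr0.
Qed.

Lemma smul_ubracket_Sgen l : is_partition l -> forall g, perm_invariant g ->
  smul (ubracket (Sgen c psi Phi)) g l =
  c * g l + \sum_(m <- undup l) psi m *
              \sum_(j < mult m l) (Phi j.+1 - Phi j) * g (remove_parts m j.+1 l).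
Proof.
move: l; apply: is_partition_ind => [|d r l _ r0 pl /all_ltn_notin dl IH] g g_inv.
  by rewrite smul_nil /ubracket smul_nil /Sgen /= !big_nil !addr0 mulr1.
rewrite smul_nseq_cat // big_ord_recl subn0 IH; last exact: perm_invariant_shift.
rewrite (eq_bigr (fun i : 'I_r => psi d * (Phi i.+1 - Phi i) * g (nseq (r - i.+1) d ++ l)));
  last by move=> i _; apply: smul_ubracket_Sgen_block.
rewrite undup_nseq_cat // big_cons mult_nseq_cat eqxx mul1n (mult_notin dl) addn0.
rewrite [X in psi d * X](eq_bigr (fun j : 'I_r => (Phi j.+1 - Phi j) * g (nseq (r - j.+1) d ++ l)));
  last by move=> j _; rewrite remove_parts_nseq_cat.
rewrite [in RHS](eq_big_seq (fun m => psi m * \sum_(j < mult m l)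
           (Phi j.+1 - Phi j) * shift r d g (remove_parts m j.+1 l))); last first.
  move=> m; rewrite mem_undup => ml.
  have dm : d != m by apply: contraNneq dl => ->.
  rewrite mult_nseq_cat (negbTE dm) add0n; congr (_ * _); apply: eq_bigr => j _.
  by congr (_ * _); apply: g_inv; apply: perm_remove_parts_nseq_cat.
rewrite mulr_sumr addrCA addrC; congr (_ + _).
by apply: eq_bigr => i _; rewrite mulrA.
Qed.

End MultiplicityFunctions.

Lemma SkfE K f :
  Skf K f = Sgen (- bernoulli K.+1 / (2 * K.+1%:R) * (is_id f)%:R) (fun m => m%:R ^+ K) f.
Proof. by []. Qed.

Lemma is_id_faulhaber n : (0 < n)%N -> is_id (faulhaber n) = (n == 1%N).
Proof.
move=> n0; rewrite /is_id; case: excluded_middle_informative => [fid|fnid].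
- apply/esym/eqP; have := fid 2%N isT.
  rewrite /faulhaber big_nat_recr //= big_nat1 expr1n => h.
  have : (2 ^ n.-1)%N = 1%N.
    by apply/eqP; rewrite -(eqr_nat rat) natrX; apply/eqP/(addrI 1); rewrite h.
  by case: n n0 {fid h} => [|[|m]] //= _; rewrite expnS => /eqP; rewrite muln_eq1.
- apply/esym/negbTE; apply: contra_notN fnid => /eqP n1 N _; subst n.
  by rewrite /faulhaber; under eq_bigr do rewrite expr0; rewrite sumr_const_nat subn1.
Qed.

Lemma faulhaber0 n : faulhaber n 0 = 0.
Proof. by rewrite /faulhaber big_geq. Qed.

Lemma faulhaberS n j : faulhaber n j.+1 - faulhaber n j = j.+1%:R ^+ n.-1.
Proof. by rewrite /faulhaber big_nat_recr //= addrC addrK. Qed.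

Lemma prodrD_subsets (I : finType) (E : {set I}) (u v : I -> rat) :
  \prod_(a in E) (u a + v a) =
  \sum_(A : {set I} | A \subset E) \prod_(a in A) u a * \prod_(a in E :\: A) v a.
Proof.
pose F a := if a \in E then u a else 0.
pose G a := if a \in E then v a else 1.
have -> : \prod_(a in E) (u a + v a) = \prod_a (F a + G a).
  by rewrite big_mkcond; apply: eq_bigr => a _; rewrite /F /G; case: ifP; rewrite ?add0r.
rewrite (bigA_distr 1 +%R F G) (bigID (fun A : {set I} => A \subset E)) /=.
rewrite [X in _ + X]big1 ?addr0 => [|J /subsetPn[a aJ aE]]; last first.
  by rewrite (bigD1 a) //= aJ /F (negbTE aE) mul0r.
apply: eq_bigr => J sJE; rewrite (bigID (mem J)) /=; congr (_ * _).
  by apply: eq_big => // a aJ; rewrite /F (subsetP sJE) // aJ.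
rewrite [LHS]big_mkcond [RHS]big_mkcond; apply: eq_bigr => a _.
by rewrite inE /G; case: (a \in J); case: (a \in E).
Qed.

Lemma sumr_undup (F : nat -> rat) (l : seq nat) :
  \sum_(y <- l) F y = \sum_(m <- undup l) (mult m l)%:R * F m.
Proof.
rewrite -big_undup_iterop_count; apply: eq_bigr => m _.
by rewrite Monoid.iteropE iter_addr_0 mulr_natl.
Qed.

Lemma filter_pred1_nseq (m : nat) (l : seq nat) : filter (pred1 m) l = nseq (mult m l) m.
Proof.
rewrite /mult -size_filter; apply/all_pred1P.
by rewrite all_filter; apply/allP => x _; apply/implyP.
Qed.

Lemma S_perm_invariant k : perm_invariant (S k).
Proof. by move=> s t st; rewrite /S (perm_big _ st). Qed.

Lemma S_remove_parts k m j l : (j <= mult m l)%N ->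
  S k (remove_parts m j l) = S k l - j%:R * m%:R ^+ k.-1.
Proof.
move=> jm; rewrite /S /remove_parts.
have pl : perm_eq l (nseq (mult m l) m ++ filter (predC1 m) l).
  by rewrite -filter_pred1_nseq perm_sym perm_filterC.
rewrite [in RHS](perm_big _ pl) !big_cat /= !big_nseq.
by rewrite !iter_addr_0 mulrnBr // [j%:R * _]mulr_natl; ring.
Qed.

Lemma big_subsets_setU1 (T : finType) (V : nmodType) (G : {set T} -> V) (D : {set T}) x :
  x \in D ->
  \sum_(B : {set T} | (x \in B) && (B \subset D)) G B =
  \sum_(A : {set T} | A \subset D :\ x) G (x |: A).
Proof.
move=> xD; rewrite (reindex_onto (fun A => x |: A) (fun B => B :\ x)) /=; last first.
  by move=> B /andP[xB _]; rewrite setD1K.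
apply: eq_bigl => A; apply/idP/idP => [/andP[/andP[_ sAD] /eqP <-]|sAD]; first exact: setSD.
have xA : x \notin A by apply/negP => /(subsetP sAD); rewrite !inE eqxx.
rewrite setU11 setU1K // eqxx andbT subUset sub1set xD /=.
exact: subset_trans sAD (subsetDl _ _).
Qed.

Lemma setDDK (T : finType) (A B : {set T}) : B \subset A -> A :\: (A :\: B) = B.
Proof. by move=> sBA; rewrite setDDr setDv set0U; apply/setIidPr. Qed.

Lemma big_subsets_setD (T : finType) (V : nmodType) (G : {set T} -> V) (D : {set T}) x :
  x \in D ->
  \sum_(B : {set T} | (x \in B) && (B \subset D)) G B =
  \sum_(Y : {set T} | Y \subset D :\ x) G (D :\: Y).
Proof.
move=> xD; rewrite (reindex_onto (fun Y => D :\: Y) (fun B => D :\: B)) /=; last first.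
  by move=> B /andP[_ sBD]; rewrite setDDK.
apply: eq_bigl => Y; apply/idP/idP => [/andP[/andP[xDY _] /eqP DDY]|sYDx].
  have sYD : Y \subset D by rewrite -DDY subsetDl.
  apply/subsetP => a aY; rewrite !inE (subsetP sYD a aY) andbT.
  by apply: contraTneq xDY => <-; rewrite inE aY.
have xY : x \notin Y by apply/negP => /(subsetP sYDx); rewrite !inE eqxx.
by rewrite inE xY xD subsetDl setDDK ?eqxx // (subset_trans sYDx) ?subsetDl.
Qed.

Section ProductsOfS.

Variables (n : nat) (k : 'I_n -> nat).
Hypothesis k_gt0 : forall i, (0 < k i)%N.

Definition Sprod (D : {set 'I_n}) : pfun := Defs.fprod (fun i => S (k i)) D.

Definition Sdeg (D : {set 'I_n}) : nat := \sum_(a in D) (k a).-1.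

Definition Sconn (D : {set 'I_n}) : pfun := Skf (Sdeg D) (faulhaber #|D|).

Lemma Sprod_perm_invariant D : perm_invariant (Sprod D).
Proof. by move=> s t st; apply: eq_bigr => i _; apply: S_perm_invariant. Qed.

Lemma Sprod_set0 q : Sprod set0 q = 1.
Proof. by rewrite /Sprod /Defs.fprod big_set0. Qed.

Lemma Sdeg_setT : Sdeg [set: 'I_n] = (\sum_(i < n) k i - n)%N.
Proof.
rewrite /Sdeg (eq_bigl xpredT) => [|i]; last by rewrite in_setT.
have <- : (\sum_(i < n) (k i).-1 + n = \sum_(i < n) k i)%N.
  rewrite -[X in (_ + X)%N](card_ord n) -sum1_card -big_split /=.
  by apply: eq_bigr => i _; rewrite addn1 prednK.
by rewrite addnK.
Qed.

Lemma odot_Sconn_Sprod (D A : {set 'I_n}) x l :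
  x \in D -> is_partition l -> A \subset D :\ x ->
  odot (Sconn (x |: A)) (Sprod (D :\: (x |: A))) l =
  (if A == set0 then - bernoulli (k x) / (2 * (k x)%:R) * Sprod (D :\ x) l else 0) +
  \sum_(m <- undup l) \sum_(j < mult m l) m%:R ^+ (k x).-1 *
     (\prod_(a in A) (j.+1%:R * m%:R ^+ (k a).-1) *
      \prod_(a in (D :\ x) :\: A) (S (k a) l - j.+1%:R * m%:R ^+ (k a).-1)).
Proof.
move=> xD pl sAD.
have xA : x \notin A by apply/negP => /(subsetP sAD); rewrite !inE eqxx.
have -> : D :\: (x |: A) = (D :\ x) :\: A.
  by apply/setP => a; rewrite !inE negb_or; case: (a == x); case: (a \in A).
have cardxA : #|x |: A| = #|A|.+1 by rewrite cardsU1 xA.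
have SdegxA : Sdeg (x |: A) = ((k x).-1 + Sdeg A)%N by rewrite /Sdeg big_setU1.
rewrite odotE // /Sconn SkfE smul_ubracket_Sgen ?faulhaber0 //; last exact: Sprod_perm_invariant.
rewrite cardxA is_id_faulhaber // eqSS cards_eq0; congr (_ + _).
  case: eqP => [->|_]; last by rewrite mulr0 mul0r.
  by rewrite setD0 mulr1 /Sdeg big_setU1 ?in_set0 //= big_set0 addn0 prednK.
apply: eq_big_seq => m _; rewrite mulr_sumr; apply: eq_bigr => j _.
rewrite faulhaberS /= SdegxA exprD -prodrXr.
have -> : j.+1%:R ^+ #|A| = \prod_(a in A) (j.+1%:R : rat) by rewrite prodr_const.
have -> : Sprod ((D :\ x) :\: A) (remove_parts m j.+1 l) =
    \prod_(a in (D :\ x) :\: A) (S (k a) l - j.+1%:R * m%:R ^+ (k a).-1).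
  by apply: eq_bigr => a _; rewrite S_remove_parts.
by rewrite big_split /= !mulrA [X in X * _ = _]mulrAC mulrC -!mulrA.
Qed.

Lemma Sprod_recursion (D : {set 'I_n}) x l : x \in D -> is_partition l ->
  \sum_(B : {set 'I_n} | (x \in B) && (B \subset D)) odot (Sconn B) (Sprod (D :\: B)) l =
  Sprod D l.
Proof.
move=> xD pl; rewrite big_subsets_setU1 //.
rewrite (eq_bigr _ (fun A sAD => odot_Sconn_Sprod xD pl sAD)) big_split /=.
rewrite (bigD1 set0) ?sub0set //= eqxx big1 ?addr0; last by move=> A /andP[_ /negbTE ->].
rewrite exchange_big /=; under eq_bigr do rewrite exchange_big /=.
have expand m j : \sum_(A : {set 'I_n} | A \subset D :\ x)
     m%:R ^+ (k x).-1 * (\prod_(a in A) (j.+1%:R * m%:R ^+ (k a).-1) *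
      \prod_(a in (D :\ x) :\: A) (S (k a) l - j.+1%:R * m%:R ^+ (k a).-1)) =
    m%:R ^+ (k x).-1 * Sprod (D :\ x) l.
  rewrite -mulr_sumr -prodrD_subsets; congr (_ * _).
  by apply: eq_bigr => a _; rewrite addrC subrK.
under eq_bigr do under eq_bigr do rewrite expand.
under eq_bigr do rewrite sumr_const card_ord -mulrnAl.
rewrite -mulr_suml -mulrDl /Sprod /Defs.fprod [in RHS](big_setD1 x) //=; congr (_ * _).
rewrite /S [in RHS]sumr_undup; congr (_ + _).
by apply: eq_bigr => m _; rewrite mulr_natl.
Qed.

End ProductsOfS.

(* [odot] is associative, commutative and unital only on partitions; acting as [+]
   elsewhere turns it into a genuine commutative monoid law on [pfun], so that the
   bigop library applies to iterated induced products. *)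
Definition podot (a b : pfun) : pfun :=
  fun l => if is_partition l then odot a b l else a l + b l.

Definition podot_one : pfun := fun l => if is_partition l then 1 else 0.

Lemma podotA : associative podot.
Proof.
move=> a b c; apply: functional_extensionality => l; rewrite /podot.
case pl: (is_partition l); last by rewrite addrA.
transitivity (odot a (odot b c) l); first by apply: odot_congr => // q pq; rewrite /podot ifT.
by rewrite -odotA //; apply: odot_congr => // q pq; rewrite /podot ifT.
Qed.

Lemma podotC : commutative podot.
Proof.
move=> a b; apply: functional_extensionality => l; rewrite /podot.
by case pl: (is_partition l); [exact: odotC | exact: addrC].
Qed.

Lemma podot1 : left_id podot_one podot.
Proof.
move=> b; apply: functional_extensionality => l; rewrite /podot.
case pl: (is_partition l); last by rewrite /podot_one pl add0r.
by rewrite -[RHS](odot1l b pl); apply: odot_congr => // q pq; rewrite /podot_one ifT.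
Qed.

HB.instance Definition _ := Monoid.isComLaw.Build pfun podot_one podot podotA podotC podot1.

Lemma big_odot_podot (I : finType) (P : pred I) (F : I -> pfun) :
  {in is_partition, \big[odot/odot_one]_(i | P i) F i =1 \big[podot/podot_one]_(i | P i) F i}.
Proof.
apply: (big_ind2 (fun a b => {in is_partition, a =1 b})) => [q pq | a b c d hab hcd q pq|//].
  by rewrite /podot_one ifT.
by rewrite /podot ifT //; apply: odot_congr.
Qed.

Definition mobius (q : nat) : rat := (-1) ^+ q.-1 * (q.-1)`!%:R.

Lemma mobius_rec q : (0 < q)%N -> mobius q + q.-1%:R * mobius q.-1 = (q == 1%N)%:R.
Proof.
case: q => [//|[|q]] _; first by rewrite /mobius /= mul0r addr0 expr0 mul1r.
by rewrite /mobius /= factS natrM exprS; ring.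
Qed.

Section SetPartitions.

Variable T : finType.
Implicit Types (D Y : {set T}) (P Q : {set {set T}}).

Lemma disjoint_setD D Y : [disjoint Y & D :\: Y].
Proof. by rewrite disjoints_subset; apply/subsetP => a aY; rewrite !inE aY. Qed.

Lemma notin_partition_setD P D Y : partition P (D :\: Y) -> Y \notin P.
Proof.
move=> pP; apply/negP => YP.
have Y0 : Y = set0.
  by rewrite -(setIidPl (partitionS pP YP)); apply: disjoint_setI0 (disjoint_setD D Y).
by move: YP; rewrite Y0 (partition0 pP).
Qed.

Lemma sum_blocks_avoiding Q D x (c : rat) : partition Q D -> x \in D ->
  \sum_(Y : {set T} | (Y \subset D :\ x) && (Y != set0)) (if Y \in Q then c else 0) = c *+ #|Q|.-1.
Proof.
move=> pQ xD; have xQ : x \in cover Q by rewrite (cover_partition pQ).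
rewrite -big_mkcondr /= (eq_bigl (fun Y : {set T} => (Y \in Q) && (x \notin Y))); last first.
  move=> Y /=; case YQ: (Y \in Q); rewrite ?andbF ?andbT //= (partition_neq0 pQ YQ) andbT.
  have sYD := partitionS pQ YQ.
  apply/idP/idP => [/subsetP sYDx|xY]; first by apply/negP => /sYDx; rewrite !inE eqxx.
  by apply/subsetP => a aY; rewrite !inE (subsetP sYD a aY) andbT; apply: contraNneq xY => <-.
have h : \sum_(Y in Q) c = c *+ #|Q| by rewrite sumr_const.
rewrite (bigID (fun Y : {set T} => x \in Y)) (bigD1 (pblock Q x)) /= in h; last first.
  by rewrite pblock_mem ?mem_pblock.
rewrite big1 ?addr0 in h => [|Y /andP[/andP[YQ xY] nY]]; last first.
  by rewrite (def_pblock (partition_trivIset pQ) YQ xY) eqxx in nY.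
have : (0 < #|Q|)%N by apply/card_gt0P; exists (pblock Q x); rewrite pblock_mem.
by move: h; case: #|Q| => // q h _ /=; apply: (addrI c); rewrite h mulrS.
Qed.

Lemma big_partition_setU1 (G : {set {set T}} -> rat) D Y : Y \subset D -> Y != set0 ->
  \sum_(P | partition P (D :\: Y)) G (Y |: P) = \sum_(Q | partition Q D && (Y \in Q)) G Q.
Proof.
move=> sYD Y0.
symmetry; rewrite (reindex_onto (fun P : {set {set T}} => Y |: P) (fun Q => Q :\ Y)) /=; last first.
  by move=> Q /andP[_ YQ]; rewrite setD1K.
apply: eq_bigl => P; apply/idP/idP => [/andP[/andP[pQ _] /eqP <-]|pP].
  exact: partitionD1 pQ (setU11 _ _).
rewrite setU11 setU1K ?(notin_partition_setD pP) // eqxx !andbT.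
have := partitionU1 pP Y0 (disjoint_setD D Y).
suff -> : Y :|: (D :\: Y) = D by [].
by apply/setP => a; rewrite !inE; case: (boolP (a \in Y)) => //= /(subsetP sYD).
Qed.

Lemma mobius_partition_sum (G : {set {set T}} -> rat) D x : x \in D ->
  \sum_(P | partition P D) mobius #|P| * G P +
  \sum_(Y : {set T} | (Y \subset D :\ x) && (Y != set0))
     \sum_(Q | partition Q D && (Y \in Q)) mobius #|Q|.-1 * G Q = G [set D].
Proof.
move=> xD; under [X in _ + X]eq_bigr do rewrite big_mkcondr /=.
rewrite exchange_big -big_split /=.
rewrite (eq_bigr (fun Q => (#|Q| == 1%N)%:R * G Q)) => [|Q pQ]; last first.
  rewrite sum_blocks_avoiding // -mulrnAl -mulrDl -[mobius _ *+ _]mulr_natl mobius_rec //.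
  by apply/card_gt0P; exists (pblock Q x); rewrite pblock_mem ?(cover_partition pQ).
have pD : partition [set D] D.
  by rewrite /partition cover1 eqxx trivIset1 inE eq_sym; apply/set0Pn; exists x.
rewrite (bigD1 [set D]) //= big1 ?cards1 ?mul1r ?addr0 // => Q /andP[pQ QD].
case: eqP => [/eqP/cards1P[Y QY]|_]; last by rewrite mul0r.
have coverQ := cover_partition pQ; rewrite QY cover1 in coverQ.
by rewrite QY coverQ eqxx in QD.
Qed.

End SetPartitions.

Section ConnectedProducts.

Variables (n : nat) (F : {set 'I_n} -> pfun).
Hypothesis F_set0 : forall q, F set0 q = 1.

Definition connected_prod (B : {set 'I_n}) : pfun :=
  fun q => \sum_(P : {set {set 'I_n}} | partition P B)
             mobius_top P * (\big[odot/odot_one]_(A in P) F A) q.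

Lemma odot_connected_prod (D Y : {set 'I_n}) l : is_partition l ->
  odot (connected_prod (D :\: Y)) (F Y) l =
  \sum_(P : {set {set 'I_n}} | partition P (D :\: Y))
     mobius #|P| * (\big[podot/podot_one]_(A in Y |: P) F A) l.
Proof.
move=> pl; rewrite odot_suml //; apply: eq_bigr => P pP; congr (_ * _).
rewrite big_setU1 ?(notin_partition_setD pP) //= /podot pl odotC //.
by apply: odot_congr => // q pq; apply: big_odot_podot.
Qed.

Lemma connected_prod_recursion (D : {set 'I_n}) x l : x \in D -> is_partition l ->
  \sum_(B : {set 'I_n} | (x \in B) && (B \subset D)) odot (connected_prod B) (F (D :\: B)) l =
  F D l.
Proof.
move=> xD pl; rewrite big_subsets_setD //.
pose Op (P : {set {set 'I_n}}) := (\big[podot/podot_one]_(A in P) F A) l.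
rewrite (eq_bigr (fun Y => \sum_(P : {set {set 'I_n}} | partition P (D :\: Y))
                             mobius #|P| * Op (Y |: P)));
  last by move=> Y sYDx; rewrite setDDK ?odot_connected_prod // (subset_trans sYDx) ?subsetDl.
rewrite (bigD1 set0) ?sub0set //= setD0.
have Op_set0 P : partition P D -> Op (set0 |: P) = Op P.
  move=> pP; rewrite /Op big_setU1 ?(partition0 pP) //= /podot pl.
  by rewrite -[RHS](odot1l _ pl); apply: odot_congr => // q pq; rewrite F_set0.
rewrite (eq_bigr (fun P : {set {set 'I_n}} => mobius #|P| * Op P)) => [|P pP];
  last by rewrite Op_set0.
rewrite [X in _ + X](eq_bigr (fun Y : {set 'I_n} =>
  \sum_(Q : {set {set 'I_n}} | partition Q D && (Y \in Q)) mobius #|Q|.-1 * Op Q)).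
  by rewrite mobius_partition_sum // /Op big_set1.
move=> Y /andP[sYDx Y0]; have sYD : Y \subset D by rewrite (subset_trans sYDx) ?subsetDl.
rewrite -big_partition_setU1 //; apply: eq_bigr => P pP.
by rewrite cardsU1 (notin_partition_setD pP).
Qed.

Lemma odot_recursion_uniq (G H : {set 'I_n} -> pfun) :
  (forall (D : {set 'I_n}) x l, x \in D -> is_partition l ->
     \sum_(B : {set 'I_n} | (x \in B) && (B \subset D)) odot (G B) (F (D :\: B)) l = F D l) ->
  (forall (D : {set 'I_n}) x l, x \in D -> is_partition l ->
     \sum_(B : {set 'I_n} | (x \in B) && (B \subset D)) odot (H B) (F (D :\: B)) l = F D l) ->
  forall D, D != set0 -> {in is_partition, G D =1 H D}.
Proof.
move=> recG recH D; elim: {D}#|D|.+1 {-2}D (ltnSn #|D|) => // N IH D DN D0 l pl.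
have [x xD] := set0Pn _ D0.
have odot_set0 f : odot f (F set0) l = f l.
  by rewrite -[RHS](odot1r f pl); apply: odot_congr => // q _; rewrite F_set0.
move: (recG D x l xD pl); rewrite -(recH D x l xD pl).
rewrite (bigD1 D) ?xD ?subxx //= [in RHS](bigD1 D) ?xD ?subxx //= setDv !odot_set0.
rewrite [X in _ + X = _ -> _](eq_bigr (fun B => odot (H B) (F (D :\: B)) l)) => [/addIr //|].
move=> B /andP[/andP[xB sBD] BD]; apply: odot_congr => // q pq; apply: IH => //.
  by rewrite -ltnS (leq_trans _ DN) // ltnS proper_card // properEneq BD.
by apply/set0Pn; exists x.
Qed.

End ConnectedProducts.

Lemma connected_prod_Sprod n (k : 'I_n -> nat) (D : {set 'I_n}) : (forall i, 0 < k i)%N ->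
  D != set0 -> {in is_partition, connected_prod (Sprod k) D =1 Sconn k D}.
Proof.
move=> k_gt0; apply: odot_recursion_uniq.
- exact: Sprod_set0.
- exact: connected_prod_recursion (@Sprod_set0 _ k).
- exact: Sprod_recursion.
Qed.

Unset Implicit Arguments.

Theorem corollary3p5p6 (n : nat) (k : 'I_n -> nat) :
  (0 < n)%N ->
  (forall i, (0 < k i)%N /\ ~~ odd (k i)) ->
  forall l : seq nat, is_partition l ->
    connected (fun i => S (k i)) l = Skf (\sum_(i < n) k i - n) (faulhaber n) l.
Proof.
move=> n_gt0 hk l pl.
have k_gt0 i : (0 < k i)%N by case: (hk i).
have setT_neq0 : [set: 'I_n] != set0 by apply/set0Pn; exists (Ordinal n_gt0).
have -> : connected (fun i => S (k i)) l = connected_prod (Sprod k) [set: 'I_n] l by [].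
by rewrite connected_prod_Sprod // /Sconn cardsT card_ord Sdeg_setT.
Qed.
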